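(* The map taking a model to its data is injective on the set of all generic models (of all layer numbers $M\ge1$): if $(\tau,R)$ is a generic $M$-layer model and $(\tau',R')$ is a generic $M'$-layer model with the same data $(\sigma,\alpha)$, then $M=M'$, $\tau=\tau'$ and $R=R'$.
   Context: An $M$-layer model ($M\ge1$) is $(\tau,R)$ with $\tau\in\mathbb{R}^{M+1}_{>0}$, $R\in(-1,1)^{M+1}$. $\mathfrak{L}_M\subset\mathbb{Z}^{M+1}_{\geq0}$: all $k$ with $k_0=1$ and $k_n>0\Rightarrow k_{n-1}>0$ ($1\le n\le M$); $\mathfrak{L}^\tau_M=\{k\in\mathfrak{L}_M:\langle k,\tau\rangle\le\langle\mathbb{1},\tau\rangle\}$. Amplitude polynomial: $\mathbb{1}=(1,\ldots,1)$; inequalities and $\min$ entrywise; $x^k=\prod_n x_n^{k_n}$, $\binom{k}{b}=\prod_n\binom{k_n}{b_n}$; $\tilde k=(k_1,\ldots,k_M,0)$, $u=\min\{\mathbb{1},\tilde k\}$, $V(k)=\{b:u\le b\le\min\{k,\tilde k\}\}$, $a(x,k)=\sum_{b\in V(k)}\binom{k}{b}\binom{\tilde k-u}{b-u}(-x)^{\tilde k-b}x^{k-b}\prod_n(1-x_n^2)^{b_n}$. The data $(\sigma,\alpha)$ of $(\tau,R)$ is read off from the normal form $\sum_{n=1}^d\alpha_n\delta(t-\sigma_n)$ ($\alpha_n\neq0$, $\sigma_1<\cdots<\sigma_d$) of $D^{(\tau,R)}(t)=\sum_{k\in\mathfrak{L}^\tau_M}a(R,k)\delta(t-\langle k,\tau\rangle)$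 (the impulse response truncated to $[0,|\tau|]$). Enumeration function $\Psi(\tau,R):\mathfrak{L}^\tau_M\to\{0,\ldots,d\}$: $k\mapsto0$ if $\langle k,\tau\rangle\notin\{\sigma_n\}$, else $k\mapsto1+\#\{n:\sigma_n<\langle k,\tau\rangle\}$. A model is generic if its enumeration function is injective and never $0$. *)

From HB Require Import structures.
From mathcomp Require Import all_boot all_order all_algebra.
Set Implicit Arguments. Unset Strict Implicit. Unset Printing Implicit Defensive.
Import Order.TTheory GRing.Theory Num.Theory.
Local Open Scope ring_scope.

Section Layers.
Variable F : archiRealFieldType.

Definition is_model (M : nat) (tau Rc : seq F) : Prop :=
  [/\ (1 <= M)%N, size tau = M.+1, size Rc = M.+1,
      forall n : 'I_M.+1, 0 < tau`_n
    & forall n : 'I_M.+1, -1 < Rc`_n < 1].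

Definition tnorm (M : nat) (tau : seq F) : F := \sum_(n < M.+1) tau`_n.

Definition dotk (M : nat) (k : 'I_M.+1 -> nat) (tau : seq F) : F :=
  \sum_(n < M.+1) (k n)%:R * tau`_n.

Definition inL (M : nat) (k : 'I_M.+1 -> nat) : bool :=
  (k ord0 == 1)%N &&
  [forall n : 'I_M.+1, (0 < n)%N ==> (0 < k n)%N ==> (0 < k (inord n.-1))%N].

Definition inLtau (M : nat) (tau : seq F) (k : 'I_M.+1 -> nat) : bool :=
  inL k && (dotk k tau <= tnorm M tau).

Definition ktil (M : nat) (k : 'I_M.+1 -> nat) : 'I_M.+1 -> nat :=
  fun n => if (n < M)%N then k (inord n.+1) else 0%N.

(* amplitude polynomial a(x,k); the summation index b ranges over V(k),
   enumerated inside the finite box {0..max k}^{M+1} (V(k) lies in it,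
   since b <= k). *)
Definition amp (M : nat) (x : seq F) (k : 'I_M.+1 -> nat) : F :=
  let kt := ktil k in
  let u := fun n => minn 1 (kt n) in
  let B := (\max_(n < M.+1) k n)%N in
  \sum_(b : {ffun 'I_M.+1 -> 'I_B.+1}
         | [forall n, (u n <= b n)%N && (b n <= minn (k n) (kt n))%N])
    \prod_(n < M.+1)
      ('C(k n, b n)%:R * 'C(kt n - u n, b n - u n)%:R
       * (- x`_n) ^+ (kt n - b n) * x`_n ^+ (k n - b n)
       * (1 - x`_n ^+ 2) ^+ b n).

(* A bound N with every k in L_M^tau satisfying k_n < N for all n
   (k_n tau_n <= <k,tau> <= <1,tau>, so k_n <= <1,tau>/tau_n). Used only
   to enumerate the finite set L_M^tau. *)
Definition kbound (M : nat) (tau : seq F) : nat :=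
  (\sum_(n < M.+1) Num.bound (tnorm M tau / tau`_n))%N.

(* coefficient of delta(t - s) in D^{(tau,R)}:
   sum of a(R,k) over k in L_M^tau with <k,tau> = s *)
Definition coefD (M : nat) (tau Rc : seq F) (s : F) : F :=
  \sum_(k : {ffun 'I_M.+1 -> 'I_(kbound M tau)}
         | inLtau tau (fun n => nat_of_ord (k n)) &&
           (dotk (fun n => nat_of_ord (k n)) tau == s))
    amp Rc (fun n => nat_of_ord (k n)).

Definition times (M : nat) (tau : seq F) : seq F :=
  [seq dotk (fun n => nat_of_ord (k n)) tau
    | k : {ffun 'I_M.+1 -> 'I_(kbound M tau)}
      <- [seq k : {ffun 'I_M.+1 -> 'I_(kbound M tau)}
            <- enum {ffun 'I_M.+1 -> 'I_(kbound M tau)}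
            | inLtau tau (fun n => nat_of_ord (k n))]].

(* normal form sum_{n=1}^d alpha_n delta(t - sigma_n):
   sigma = increasing list of the distinct times with nonzero total
   amplitude, alpha = the corresponding amplitudes. *)
Definition sigma (M : nat) (tau Rc : seq F) : seq F :=
  sort <=%R (undup [seq s <- times M tau | coefD M tau Rc s != 0]).

Definition alpha (M : nat) (tau Rc : seq F) : seq F :=
  [seq coefD M tau Rc s | s <- sigma M tau Rc].

Definition data (M : nat) (tau Rc : seq F) : seq F * seq F :=
  (sigma M tau Rc, alpha M tau Rc).

Definition Psi (M : nat) (tau Rc : seq F) (k : 'I_M.+1 -> nat) : nat :=
  let t := dotk k tau in
  let sg := sigma M tau Rc in
  if t \in sg then (count (fun s => s < t) sg).+1 else 0%N.

Definition generic (M : nat) (tau Rc : seq F) : Prop :=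
  (forall k k' : 'I_M.+1 -> nat, inLtau tau k -> inLtau tau k' ->
     Psi tau Rc k = Psi tau Rc k' -> k =1 k')
  /\ (forall k : 'I_M.+1 -> nat, inLtau tau k -> Psi tau Rc k <> 0%N).

End Layers.

(* Write T_n = tau_0 + ... + tau_n for the partial sums of tau; T_n is the
   time of the staircase e_n = (1,...,1,0,...,0) in L_M (ones up to index n),
   and the amplitude of e_n is R_n * prod_{j<n} (1 - R_j^2).  The data
   determine the model in three steps.
   - Every time <k,tau> < T_n has k supported in [0,n), hence is an
     "n-prefix time" sum_{j<n} c_j tau_j with c a chain (c_0 = 1, c_j > 0
     forces c_{j-1} > 0); such times only depend on tau_0, ..., tau_{n-1}.
     For a generic model, T_n itself is NOT an n-prefix time (two different
     elements of L_M^tau would share the time T_n) but lies in sigma.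
   - Comparing two generic models with the same sigma, induction on n gives
     T_n = T'_n for all common indices, so tau = tau' on the common layers,
     and the same argument shows that neither model can have more layers.
   - For a generic model the amplitude at time <k,tau> is exactly a(R,k);
     evaluating alpha at the times T_n recovers R_n by induction on n. *)
From Pilot Require Import Defs.
From HB Require Import structures.
From mathcomp Require Import all_boot all_order all_algebra.
From Stdlib Require Import FunctionalExtensionality.
Import Order.TTheory GRing.Theory Num.Theory.
Set Implicit Arguments. Unset Strict Implicit. Unset Printing Implicit Defensive.
Local Open Scope ring_scope.

Section Layers.
Variable F : archiRealFieldType.
Implicit Types (tau Rc : seq F) (M n : nat).

Lemma inL_first M (k : 'I_M.+1 -> nat) : inL k -> k ord0 = 1%N.
Proof. by case/andP=> /eqP. Qed.

Lemma inL_prefix M (k : 'I_M.+1 -> nat) (i j : 'I_M.+1) :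
  inL k -> (0 < k i)%N -> (j <= i)%N -> (0 < k j)%N.
Proof.
case/andP=> _ /forallP down ki le_ji.
suff below d : (d <= i)%N -> (0 < k (inord (i - d)))%N.
  by have := below _ (leq_subr j i); rewrite subKn // inord_val.
elim: d => [|d IHd] le_di; first by rewrite subn0 inord_val.
have := down (inord (i - d)); rewrite inordK; last first.
  by rewrite (leq_ltn_trans (leq_subr _ _)).
by rewrite subn_gt0 le_di subnS /= => /implyP/(_ (IHd (ltnW le_di))).
Qed.

Definition psum tau n : F := \sum_(j < n.+1) tau`_j.

Lemma tau_eq_of_psum tau tau' n :
  (forall j, (j < n)%N -> psum tau j = psum tau' j) ->
  forall j, (j < n)%N -> tau`_j = tau'`_j.
Proof.
move=> eq_psum [|j] lt_jn; first by have := eq_psum 0%N lt_jn; rewrite /psum !big_ord1.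
have psumS (t : seq F) i : psum t i.+1 = psum t i + t`_i.+1 by rewrite /psum big_ord_recr.
by move: (eq_psum j.+1 lt_jn); rewrite !psumS eq_psum ?(ltnW lt_jn) // => /addrI.
Qed.

Definition stair M n : 'I_M.+1 -> nat := fun j => nat_of_bool (j <= n)%N.
Arguments stair : clear implicits.

Lemma inL_stair M n : inL (stair M n).
Proof.
apply/andP; split=> //; apply/forallP=> j; apply/implyP=> j_gt0; apply/implyP.
rewrite /stair inordK; last by rewrite (leq_ltn_trans (leq_pred _)).
by case: (leqP j n) => // le_jn _; rewrite (leq_trans (leq_pred _)).
Qed.

Lemma dotk_stair M n tau : (n <= M)%N -> dotk (stair M n) tau = psum tau n.
Proof.
move=> le_nM; rewrite /psum (big_ord_widen M.+1 (fun j => tau`_j)) //.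
rewrite /dotk [RHS]big_mkcond /=; apply: eq_bigr=> i _.
by rewrite /stair ltnS; case: (i <= n)%N; rewrite ?mul1r ?mul0r.
Qed.

Definition chain n (c : nat -> nat) : Prop :=
  c 0%N = 1%N /\ forall j, (0 < j < n)%N -> (0 < c j)%N -> (0 < c j.-1)%N.

Definition prefix_time tau n (t : F) : Prop :=
  exists2 c, chain n c & t = \sum_(j < n) (c j)%:R * tau`_j.

Lemma prefix_time_ext tau tau' n t :
  (forall j, (j < n)%N -> tau`_j = tau'`_j) ->
  prefix_time tau n t -> prefix_time tau' n t.
Proof.
move=> eq_tau [c c_chain ->]; exists c => //.
by apply: eq_bigr=> i _; rewrite eq_tau.
Qed.

Lemma prefix_time_of_support M tau (k : 'I_M.+1 -> nat) n :
  (n <= M.+1)%N -> inL k -> (forall j : 'I_M.+1, (n <= j)%N -> k j = 0%N) ->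
  prefix_time tau n (dotk k tau).
Proof.
move=> le_nM kL k_supp; exists (fun j => k (inord j)).
  split.
    by rewrite (_ : inord 0 = ord0) ?(inL_first kL) //; apply: val_inj; rewrite /= inordK.
  move=> j /andP[j_gt0 lt_jn] kj; have lt_jM : (j < M.+1)%N by apply: leq_trans lt_jn _.
  by case/andP: kL => _ /forallP/(_ (inord j)); rewrite inordK // j_gt0 kj.
rewrite (big_ord_widen M.+1 (fun j => (k (inord j))%:R * tau`_j)) //.
rewrite /dotk (bigID (fun i : 'I_M.+1 => (i < n)%N)) /= [X in _ + X]big1 ?addr0.
  by apply: eq_bigr=> i _; rewrite inord_val.
by move=> i; rewrite -leqNgt => /k_supp ->; rewrite mul0r.
Qed.

Lemma support_of_prefix_time M tau n t :
  (0 < n <= M.+1)%N -> prefix_time tau n t ->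
  exists k : 'I_M.+1 -> nat,
    [/\ inL k, forall j : 'I_M.+1, (n <= j)%N -> k j = 0%N & dotk k tau = t].
Proof.
case/andP=> n_gt0 le_nM [c [c0 c_chain] ->].
exists (fun j : 'I_M.+1 => if (j < n)%N then c j else 0%N); split.
- apply/andP; split; first by rewrite /= n_gt0 c0.
  apply/forallP=> j; apply/implyP=> j_gt0; apply/implyP.
  case: ifP => // lt_jn cj.
  rewrite inordK; last by rewrite (leq_ltn_trans (leq_pred _)).
  by rewrite (leq_ltn_trans (leq_pred _)) // c_chain // j_gt0.
- by move=> j; rewrite leqNgt => /negbTE ->.
- rewrite (big_ord_widen M.+1 (fun j => (c j)%:R * tau`_j)) //.
  rewrite /dotk [RHS]big_mkcond /=; apply: eq_bigr=> i _.
  by case: ifP; rewrite ?mul0r.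
Qed.

Lemma sigma_time M tau Rc t : t \in sigma M tau Rc ->
  exists2 k : 'I_M.+1 -> nat, inLtau tau k & dotk k tau = t.
Proof.
rewrite /sigma mem_sort mem_undup mem_filter => /andP[_].
case/mapP=> k; rewrite mem_filter => /andP[kL _] ->.
by exists (fun j => nat_of_ord (k j)).
Qed.

Lemma sigma_prefix_time M tau Rc t : t \in sigma M tau Rc -> prefix_time tau M.+1 t.
Proof.
case/sigma_time=> k /andP[kL _] <-.
by apply: prefix_time_of_support => // j; rewrite leqNgt ltn_ord.
Qed.

Section OneModel.
Variables (M : nat) (tau Rc : seq F).
Hypothesis model : is_model M tau Rc.

Lemma tau_pos (j : 'I_M.+1) : 0 < tau`_j.
Proof. by case: model. Qed.

Lemma inLtau_stair n : inLtau tau (stair M n).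
Proof.
apply/andP; split; first exact: inL_stair.
apply: ler_sum=> i _; rewrite /stair.
by case: (i <= n)%N; rewrite ?mul1r ?mul0r // ltW ?tau_pos.
Qed.

Lemma kbound_lt (k : 'I_M.+1 -> nat) : inLtau tau k -> forall j, (k j < kbound M tau)%N.
Proof.
case/andP=> _ le_norm j.
have kj_le : (k j)%:R * tau`_j <= tnorm M tau.
  apply: le_trans le_norm; rewrite /dotk (bigD1 j) //= lerDl.
  by apply: sumr_ge0=> i _; rewrite mulr_ge0 // ltW ?tau_pos.
have kj_le' : (k j)%:R <= tnorm M tau / tau`_j by rewrite ler_pdivlMr ?tau_pos.
have : (k j < Num.bound (tnorm M tau / tau`_j))%N.
  by rewrite -(ltr_nat F) (le_lt_trans kj_le') // archi_boundP // (le_trans _ kj_le').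
by move/leq_trans; apply; rewrite /kbound (bigD1 j) //= leq_addr.
Qed.

Lemma psum_le_time (k : 'I_M.+1 -> nat) (n : 'I_M.+1) :
  inL k -> (0 < k n)%N -> psum tau n <= dotk k tau.
Proof.
move=> kL kn; rewrite -(@dotk_stair M); last by rewrite -ltnS.
apply: ler_sum=> i _; apply: ler_wpM2r; first exact: ltW (tau_pos i).
rewrite ler_nat /stair.
by case: (leqP i n) => // le_in; apply: (inL_prefix kL kn).
Qed.

Lemma sigma_below_psum n t : (n <= M)%N ->
  t \in sigma M tau Rc -> t < psum tau n -> prefix_time tau n t.
Proof.
move=> le_nM /sigma_time [k /andP[kL _] <-] lt_t.
apply: prefix_time_of_support => //; first exact: ltnW.
move=> j le_nj; apply/eqP; rewrite -leqn0 leqNgt; apply/negP=> kj.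
have /(psum_le_time kL) : (0 < k (inord n))%N.
  by apply: (inL_prefix kL kj); rewrite inordK.
by rewrite inordK // => /(lt_le_trans lt_t); rewrite ltxx.
Qed.

Hypothesis gen : generic M tau Rc.

Lemma generic_dotk_inj (k k' : 'I_M.+1 -> nat) : inLtau tau k -> inLtau tau k' ->
  dotk k tau = dotk k' tau -> k =1 k'.
Proof. by move=> kL k'L eq_t; apply: (proj1 gen) => //; rewrite /Psi eq_t. Qed.

Lemma generic_time_in_sigma (k : 'I_M.+1 -> nat) : inLtau tau k ->
  dotk k tau \in sigma M tau Rc.
Proof. by move=> kL; have := proj2 gen k kL; rewrite /Psi; case: ifP. Qed.

Lemma psum_in_sigma n : (n <= M)%N -> psum tau n \in sigma M tau Rc.
Proof. by move=> le_nM; rewrite -(@dotk_stair M) // generic_time_in_sigma ?inLtau_stair. Qed.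

(* T_n is not an n-prefix time: the witness would be an element of L_M^tau
   other than e_n with time T_n. *)
Lemma psum_not_prefix_time n : (n <= M)%N -> ~ prefix_time tau n (psum tau n).
Proof.
move=> le_nM; case: n le_nM => [|n] le_nM pt.
  case: pt => c _; rewrite big_ord0 /psum big_ord1 => tau0.
  by have := tau_pos ord0; rewrite tau0 ltxx.
have [|k [kL k_supp k_t]] := support_of_prefix_time (M := M) _ pt.
  by rewrite /= ltnS ltnW.
have kLtau : inLtau tau k.
  by rewrite /inLtau kL k_t -(@dotk_stair M) //; case/andP: (inLtau_stair n.+1).
have same_time : dotk k tau = dotk (stair M n.+1) tau by rewrite k_t dotk_stair.
have := generic_dotk_inj kLtau (inLtau_stair n.+1) same_time (inord n.+1).
by rewrite k_supp /stair inordK ?leqnn.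
Qed.

Lemma coefD_generic (k : 'I_M.+1 -> nat) : inLtau tau k ->
  Defs.coefD M tau Rc (dotk k tau) = amp Rc k.
Proof.
move=> kL.
pose kb : {ffun 'I_M.+1 -> 'I_(kbound M tau)} := [ffun j => Ordinal (kbound_lt kL j)].
have kbE : (fun j => nat_of_ord (kb j)) = k.
  by apply: functional_extensionality=> j; rewrite /kb ffunE.
rewrite /Defs.coefD (bigD1 kb) /=; last by rewrite kbE kL eqxx.
rewrite kbE big1 ?addr0 // => k' /andP[/andP[k'L /eqP eq_t] neq_k'].
case/eqP: neq_k'; apply/ffunP=> j; apply: val_inj.
by rewrite /kb ffunE /= (generic_dotk_inj k'L kL eq_t).
Qed.

End OneModel.

Lemma ktil_stair M n : (n <= M)%N -> ktil (stair M n) = fun j => nat_of_bool (j < n)%N.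
Proof.
move=> le_nM; apply: functional_extensionality=> j; rewrite /ktil /stair.
case: ifP=> lt_jM; first by rewrite inordK.
have /eqP -> : j == M :> nat by rewrite eqn_leq -ltnS ltn_ord leqNgt lt_jM.
by rewrite ltnNge le_nM.
Qed.

(* a(x, e_n) = x_n * prod_{j<n} (1 - x_j^2): the sum over V(e_n) has the
   single term b = tilde e_n. *)
Lemma amp_stair M n (x : seq F) : (n <= M)%N ->
  amp x (stair M n) = x`_n * \prod_(j < M.+1 | (j < n)%N) (1 - x`_j ^+ 2).
Proof.
move=> le_nM; rewrite /amp ktil_stair //.
have min1E (a : bool) : minn 1 a = a by case: a.
have minE (j : 'I_M.+1) : minn (stair M n j) (j < n)%N = (j < n)%N.
  by rewrite /stair; case: (ltngtP j n).
have b0_lt (j : 'I_M.+1) : (nat_of_bool (j < n)%N < (\max_(i < M.+1) stair M n i).+1)%N.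
  by rewrite ltnS (leq_trans (leq_b1 _)) // (leq_trans _ (leq_bigmax ord0)).
pose b0 : {ffun 'I_M.+1 -> 'I_(\max_(i < M.+1) stair M n i).+1} :=
  [ffun j : 'I_M.+1 => inord (nat_of_bool (j < n)%N)].
rewrite (bigD1 b0) /=; last by apply/forallP=> j; rewrite min1E minE ffunE inordK // leqnn.
rewrite [X in _ + X]big1 ?addr0; last first.
  move=> b /andP[/forallP b_box /negP []]; apply/eqP/ffunP=> j; apply: val_inj.
  move: (b_box j); rewrite min1E minE ffunE /= inordK // => bj.
  by apply/eqP; rewrite eqn_leq andbC.
rewrite (eq_bigr (fun j : 'I_M.+1 => (if (j < n)%N then 1 - x`_j ^+ 2 else 1) *
   (if j == n :> nat then x`_j else 1))); last first.
  move=> j _; rewrite ffunE inordK // /stair.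
  by case: (ltngtP j n) => _ /=;
    rewrite ?(minnn, minn0, subnn, subn0, bin0, binn, expr0, expr1, mul1r, mulr1).
rewrite big_split /= -big_mkcond mulrC; congr (_ * _).
rewrite (bigD1 (@inord M n)) //= inordK ?eqxx // big1 ?mulr1 // => i ne_in.
by rewrite ifF //; apply: contraNF ne_in => /eqP eq_in; apply/eqP/val_inj; rewrite /= inordK.
Qed.

(* One direction of the comparison of two models with the same sigma: the
   first model's prefix times are transported to the second one, which is
   generic. *)
Section Comparison.
Variables (M M' : nat) (tau Rc tau' Rc' : seq F).
Hypotheses (model : is_model M tau Rc) (model' : is_model M' tau' Rc').
Hypothesis gen' : generic M' tau' Rc'.
Hypothesis same_sigma : sigma M tau Rc = sigma M' tau' Rc'.

Lemma psum_not_lt n : (n <= M)%N -> (n <= M')%N ->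
  (forall j, (j < n)%N -> tau`_j = tau'`_j) -> ~ psum tau' n < psum tau n.
Proof.
move=> le_nM le_nM' eq_tau lt_psum.
have in_sigma : psum tau' n \in sigma M tau Rc by rewrite same_sigma psum_in_sigma.
apply: (psum_not_prefix_time model' gen' le_nM').
exact: prefix_time_ext eq_tau (sigma_below_psum model le_nM in_sigma lt_psum).
Qed.

(* If tau' extends tau by further layers, T'_{M+1} would be an (M+1)-prefix
   time, hence a time of the first model, and so not generic for tau'. *)
Lemma layers_not_lt : (M < M')%N -> ~ (forall j, (j <= M)%N -> tau`_j = tau'`_j).
Proof.
move=> lt_MM' eq_tau.
have in_sigma : psum tau' M.+1 \in sigma M tau Rc by rewrite same_sigma psum_in_sigma.
apply: (psum_not_prefix_time model' gen' lt_MM').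
apply: prefix_time_ext (sigma_prefix_time in_sigma) => j.
by rewrite ltnS; apply: eq_tau.
Qed.

End Comparison.

Section SameTimes.
Variables (M M' : nat) (tau Rc tau' Rc' : seq F).
Hypotheses (model : is_model M tau Rc) (model' : is_model M' tau' Rc').
Hypotheses (gen : generic M tau Rc) (gen' : generic M' tau' Rc').
Hypothesis same_sigma : sigma M tau Rc = sigma M' tau' Rc'.

Lemma psums_agree n : (n <= M)%N -> (n <= M')%N -> psum tau n = psum tau' n.
Proof.
elim/ltn_ind: n => n IH le_nM le_nM'.
have eq_tau : forall j, (j < n)%N -> tau`_j = tau'`_j.
  apply: tau_eq_of_psum => j lt_jn.
  by apply: IH; rewrite // (leq_trans (ltnW lt_jn)).
have eq_tau' j : (j < n)%N -> tau'`_j = tau`_j by move/eq_tau.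
case: (ltgtP (psum tau n) (psum tau' n)) => // lt_psum.
- by case: (psum_not_lt model' model gen (esym same_sigma) le_nM' le_nM eq_tau' lt_psum).
- by case: (psum_not_lt model model' gen' same_sigma le_nM le_nM' eq_tau lt_psum).
Qed.

Lemma tau_agree j : (j <= M)%N -> (j <= M')%N -> tau`_j = tau'`_j.
Proof.
move=> le_jM le_jM'; apply: (@tau_eq_of_psum _ _ j.+1) => // i.
by rewrite ltnS => le_ij; apply: psums_agree; rewrite (leq_trans le_ij).
Qed.

Lemma layers_eq : M = M'.
Proof.
case: (ltngtP M M') => // [lt_MM'|lt_M'M].
- case: (layers_not_lt model' gen' same_sigma lt_MM') => j le_jM.
  by rewrite tau_agree // (leq_trans le_jM) // ltnW.
- case: (layers_not_lt model gen (esym same_sigma) lt_M'M) => j le_jM'.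
  by rewrite tau_agree // (leq_trans le_jM') // ltnW.
Qed.

Lemma tau_eq : tau = tau'.
Proof.
case: model => _ size_tau _ _ _; case: model' => _ size_tau' _ _ _.
apply: (@eq_from_nth _ 0); first by rewrite size_tau size_tau' layers_eq.
by move=> j; rewrite size_tau ltnS => le_jM; rewrite tau_agree // -layers_eq.
Qed.

End SameTimes.

Lemma one_sub_sqr_gt0 (x : F) : -1 < x < 1 -> 0 < 1 - x ^+ 2.
Proof.
case/andP=> gt_m1 lt_1; rewrite -(mul1r 1) -expr2 subr_sqr mulr_gt0 ?subr_gt0 //.
by rewrite addrC -ltrBlDr sub0r.
Qed.

(* With the layers known, the amplitudes at the times T_n determine the
   reflection coefficients one after the other. *)
Section SameLayers.
Variables (M : nat) (tau Rc Rc' : seq F).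
Hypotheses (model : is_model M tau Rc) (model' : is_model M tau Rc').
Hypotheses (gen : generic M tau Rc) (gen' : generic M tau Rc').
Hypothesis same_data : data M tau Rc = data M tau Rc'.

Lemma Rc_agree n : (n <= M)%N -> Rc`_n = Rc'`_n.
Proof.
case: same_data => same_sigma same_alpha.
have same_coef s : s \in sigma M tau Rc -> Defs.coefD M tau Rc s = Defs.coefD M tau Rc' s.
  by move: same_alpha; rewrite /alpha same_sigma => /eq_in_map; apply.
elim/ltn_ind: n => n IH le_nM.
have := same_coef _ (psum_in_sigma model gen le_nM).
rewrite -(@dotk_stair M) // (coefD_generic model gen) ?(coefD_generic model' gen');
  rewrite ?(inLtau_stair model) ?(inLtau_stair model') // !amp_stair //.
under [in RHS]eq_bigr => j lt_jn do rewrite -IH ?(leq_trans (ltnW lt_jn)) //.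
apply: mulIf; apply: lt0r_neq0; apply: prodr_gt0=> j _.
by apply: one_sub_sqr_gt0; case: model => _ _ _ _; apply.
Qed.

Lemma Rc_eq : Rc = Rc'.
Proof.
case: model => _ _ size_Rc _ _; case: model' => _ _ size_Rc' _ _.
apply: (@eq_from_nth _ 0); first by rewrite size_Rc size_Rc'.
by move=> j; rewrite size_Rc ltnS => /Rc_agree.
Qed.

End SameLayers.

End Layers.

Theorem corollary4p5 (F : archiRealFieldType) (M M' : nat)
  (tau Rc tau' Rc' : seq F) :
  is_model M tau Rc -> is_model M' tau' Rc' ->
  generic M tau Rc -> generic M' tau' Rc' ->
  data M tau Rc = data M' tau' Rc' ->
  [/\ M = M', tau = tau' & Rc = Rc'].
Proof.
move=> model model' gen gen' same_data.
have same_sigma : sigma M tau Rc = sigma M' tau' Rc' by case: same_data.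
have eq_M := layers_eq model model' gen gen' same_sigma; subst M'.
have eq_tau := tau_eq model model' gen gen' same_sigma; subst tau'.
by split=> //; apply: Rc_eq same_data.
Qed.
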